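(* Let $K\ge1$, $x_1,\dots,x_n\in\mathbb{R}^p$, $\mathsf y_1,\dots,\mathsf y_n\in\mathbb{R}^{K+1}$, and suppose a minimizer $\hat{\mathsf B}$ of $\sum_i\mathcal L_i(\mathsf B^Tx_i)$ over $\mathsf B\in\mathbb{R}^{p\times(K+1)}$ exists and that $\sum_{l=1}^nH_l\otimes(x_lx_l^T)$ is invertible, where $\hat B=\hat{\mathsf B}Q$. Then $V_i=Q^T\mathsf V_iQ$ for every $i\in[n]$.
   Context: $Q\in\mathbb{R}^{(K+1)\times K}$ satisfies $QQ^T=I_{K+1}-\frac{1}{K+1}\mathbf 1\mathbf 1^T$, $Q^TQ=I_K$. $\mathcal L_i(u)=-\sum_k\mathsf y_{ik}u_k+\log\sum_{k'}e^{u_{k'}}$. $\hat{\mathsf p}_{ik}=\exp(x_i^T\hat{\mathsf B}e_k)/\sum_{k'}\exp(x_i^T\hat{\mathsf B}e_{k'})$, $\mathsf H_i=\operatorname{diag}(\hat{\mathsf p}_i)-\hat{\mathsf p}_i\hat{\mathsf p}_i^T$, $\mathsf V_i=\mathsf H_i-(\mathsf H_i\otimes x_i^T)[\sum_l\mathsf H_l\otimes(x_lx_l^T)]^\dagger(\mathsf H_i\otimes x_i)$ ($\dagger$ = Moore–Penrose inverse). $H_i=Q^T\mathsf H_iQ$ (the Hessian of $u\mapsto\mathcal L_i(Qu)$ at $\hat B^Tx_i$), $V_i=H_i-(H_i\otimes x_i^T)[\sum_lH_l\otimes(x_lx_l^T)]^{-1}(H_i\otimes x_i)$. *)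

From HB Require Import structures.
From mathcomp Require Import all_boot all_order all_algebra.
From mathcomp Require Import all_classical all_reals all_analysis.
From mathcomp Require Export mxtens.
Set Implicit Arguments. Unset Strict Implicit. Unset Printing Implicit Defensive.
Import Order.TTheory GRing.Theory Num.Theory.
Local Open Scope ring_scope.

Section Defs.
Variable R : realType.

Definition is_mp_inverse {m n} (A : 'M[R]_(m, n)) (X : 'M[R]_(n, m)) : Prop :=
  [/\ A *m X *m A = A, X *m A *m X = X,
      (A *m X)^T = A *m X & (X *m A)^T = X *m A].

Definition mp_inverse {m n} (A : 'M[R]_(m, n)) : 'M[R]_(n, m) :=
  xget 0 (is_mp_inverse A).

Definition mlogit_loss {k} (y u : 'cV[R]_k) : R :=
  - (\sum_(j < k) y j 0 * u j 0) + ln (\sum_(j < k) expR (u j 0)).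

Definition softmax {k} (u : 'cV[R]_k) : 'cV[R]_k :=
  \col_j (expR (u j 0) / \sum_(j' < k) expR (u j' 0)).

Definition Hs {p k} (B : 'M[R]_(p, k)) (x : 'cV[R]_p) : 'M[R]_k :=
  let ph := softmax (B^T *m x) in diag_mx ph^T - ph *m ph^T.

Definition kron_rowv {k p} (H : 'M[R]_k) (x : 'cV[R]_p) : 'M[R]_(k, k * p) :=
  castmx (muln1 k, erefl) (H *t x^T).
Definition kron_colv {k p} (H : 'M[R]_k) (x : 'cV[R]_p) : 'M[R]_(k * p, k) :=
  castmx (erefl, muln1 k) (H *t x).

Definition gram_kron {n k p} (H : 'I_n -> 'M[R]_k) (x : 'I_n -> 'cV[R]_p)
  : 'M[R]_(k * p) := \sum_(l < n) (H l *t (x l *m (x l)^T)).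

Definition Vs {n k p} (H : 'I_n -> 'M[R]_k) (x : 'I_n -> 'cV[R]_p) (i : 'I_n)
  : 'M[R]_k :=
  H i - kron_rowv (H i) (x i) *m mp_inverse (gram_kron H x)
        *m kron_colv (H i) (x i).

Definition Vr {n k p} (H : 'I_n -> 'M[R]_k) (x : 'I_n -> 'cV[R]_p) (i : 'I_n)
  : 'M[R]_k :=
  H i - kron_rowv (H i) (x i) *m invmx (gram_kron H x)
        *m kron_colv (H i) (x i).

End Defs.

From HB Require Import structures.
From mathcomp Require Import all_boot all_order all_algebra.
From mathcomp Require Import all_classical all_reals all_analysis.
Import Order.TTheory GRing.Theory Num.Theory.
Local Open Scope ring_scope.

(* Each softmax vector sums to one, so every H_l annihilates the all-ones
   matrix J on both sides; as Q Q^T = I - J/(K+1), this gives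
   Q (Q^T H_l Q) Q^T = H_l.  With U := Q (x) I_p, which satisfies U^T U = I,
   the full Gram matrix is therefore U G U^T for the reduced one G, whose
   Moore-Penrose inverse is U G^-1 U^T; conjugating the factors H_i (x) x_i^T
   by Q and U then turns V_i into its reduced counterpart. *)

Section Centering.
Context {F : comPzRingType} {k K : nat} {Q : 'M[F]_(k, K)} {c : F}.
Hypothesis QQt : Q *m Q^T = 1%:M - c *: const_mx 1.

Lemma centered_conjK (H : 'M[F]_k) :
  H *m (const_mx 1 : 'M[F]_k) = 0 -> (const_mx 1 : 'M[F]_k) *m H = 0 ->
  Q *m (Q^T *m H *m Q) *m Q^T = H.
Proof.
move=> HJ JH; rewrite !mulmxA QQt -mulmxA QQt mulmxBr mulmxBl mulmx1 mul1mx.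
by rewrite -scalemxAl JH scaler0 subr0 -scalemxAr HJ scaler0 subr0.
Qed.

End Centering.

Section Logistic.
Variable R : realType.

Lemma mp_inverse_uniq m n (A : 'M[R]_(m, n)) X Y :
  is_mp_inverse A X -> is_mp_inverse A Y -> X = Y.
Proof.
move=> [AXA XAX AXsym XAsym] [AYA YAY AYsym YAsym].
have AX_AY : A *m X = A *m Y.
  rewrite -AXsym -{1}AYA -(mulmxA (A *m Y)) trmx_mul AXsym AYsym.
  by rewrite mulmxA AXA.
have XA_YA : X *m A = Y *m A.
  rewrite -YAsym -{2}AXA -(mulmxA A) (mulmxA Y) trmx_mul XAsym YAsym.
  by rewrite -mulmxA (mulmxA A) AYA.
by rewrite -XAX -mulmxA AX_AY mulmxA XA_YA YAY.
Qed.

Lemma mp_inverseE m n (A : 'M[R]_(m, n)) X : is_mp_inverse A X -> mp_inverse A = X.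
Proof.
by move=> AX; apply: xget_unique => // Y AY; apply: mp_inverse_uniq AY AX.
Qed.

Lemma mp_inverse_conj m n (U : 'M[R]_(m, n)) (M : 'M[R]_n) :
  U^T *m U = 1%:M -> M \in unitmx ->
  mp_inverse (U *m M *m U^T) = U *m invmx M *m U^T.
Proof.
move=> UtU Munit; apply: mp_inverseE.
have cancelUtU p (N : 'M[R]_(p, n)) : N *m U^T *m U = N.
  by rewrite -mulmxA UtU mulmx1.
have projL : U *m M *m U^T *m (U *m invmx M *m U^T) = U *m U^T.
  by rewrite !mulmxA cancelUtU -(mulmxA U) mulmxV // mulmx1.
have projR : U *m invmx M *m U^T *m (U *m M *m U^T) = U *m U^T.
  by rewrite !mulmxA cancelUtU -(mulmxA U) mulVmx // mulmx1.
by split; rewrite ?projL ?projR ?trmx_mul ?trmxK // !mulmxA cancelUtU.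
Qed.


Lemma castmx_tens1 m n (em : m = (m * 1)%N) (en : n = (n * 1)%N)
    (M : 'M[R]_(m, n)) :
  castmx (em, en) M = M *t (1%:M : 'M[R]_1).
Proof.
by rewrite tens_mx_scalar scale1r; congr (castmx (_, _) _); apply: eq_irrelevance.
Qed.

Lemma kron_rowv_conj k K p (Q : 'M[R]_(k, K)) (A : 'M[R]_k) (x : 'cV[R]_p) :
  Q^T *m kron_rowv A x *m (Q *t 1%:M) = kron_rowv (Q^T *m A *m Q) x.
Proof.
rewrite /kron_rowv mulmx_cast castmx_id; apply: (canRL (castmxKV _ _)).
rewrite !castmx_mul castmx_comp !castmx_id castmx_tens1.
by rewrite !tensmx_mul mul1mx mulmx1.
Qed.

Lemma kron_colvE k p (A : 'M[R]_k) (x : 'cV[R]_p) :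
  kron_colv A x = (kron_rowv A^T x)^T.
Proof. by rewrite /kron_colv /kron_rowv trmx_cast trmx_tens !trmxK. Qed.

Lemma kron_colv_conj k K p (Q : 'M[R]_(k, K)) (A : 'M[R]_k) (x : 'cV[R]_p) :
  (Q *t 1%:M)^T *m kron_colv A x *m Q = kron_colv (Q^T *m A *m Q) x.
Proof.
rewrite !kron_colvE.
have -> : (Q^T *m A *m Q)^T = Q^T *m A^T *m Q by rewrite !trmx_mul trmxK mulmxA.
by rewrite -kron_rowv_conj !trmx_mul trmxK mulmxA.
Qed.

Lemma tensmx1 m n : (1%:M : 'M[R]_m) *t (1%:M : 'M[R]_n) = 1%:M.
Proof.
apply/matrixP=> i j.
case: (mxtens_indexP i) => i0 i1; case: (mxtens_indexP j) => j0 j1.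
rewrite tensmxE !mxE (inj_eq (can_inj (@mxtens_indexK _ _))) xpair_eqE.
by case: (i0 == j0); case: (i1 == j1); rewrite ?mulr1 ?mulr0 ?mul0r.
Qed.

Lemma gram_kron_conj n k K p (Q : 'M[R]_(k, K)) (H : 'I_n -> 'M[R]_K)
    (x : 'I_n -> 'cV[R]_p) :
  (Q *t 1%:M) *m gram_kron H x *m (Q *t 1%:M)^T
  = gram_kron (fun l => Q *m H l *m Q^T) x.
Proof.
rewrite /gram_kron mulmx_sumr mulmx_suml; apply: eq_bigr => l _.
by rewrite trmx_tens trmx1 !tensmx_mul mul1mx mulmx1.
Qed.


Lemma softmax_sum1 k (u : 'cV[R]_k.+1) : \sum_j softmax u j 0 = 1.
Proof.
rewrite /softmax; under eq_bigr do rewrite mxE; rewrite -mulr_suml divff //.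
rewrite gt_eqF // big_ord_recl; apply: ltr_pwDl; first exact: expR_gt0.
by apply: sumr_ge0 => l _; apply: ltW; exact: expR_gt0.
Qed.

Lemma diag_sub_outer_mul_const1 k (ph : 'cV[R]_k) : \sum_j ph j 0 = 1 ->
  (diag_mx ph^T - ph *m ph^T) *m (const_mx 1 : 'M[R]_k) = 0.
Proof.
move=> sum_ph; apply/matrixP=> i j; rewrite !mxE.
under eq_bigr do rewrite !mxE mulr1.
rewrite sumrB (bigD1 i) //= big1 => [|l /negbTE neq_li]; last first.
  by rewrite eq_sym neq_li mulr0n.
rewrite eqxx mulr1n addr0.
under eq_bigr do rewrite big_ord1 !mxE.
by rewrite -mulr_sumr sum_ph mulr1 subrr.
Qed.

Lemma tr_Hs p k (B : 'M[R]_(p, k)) (x : 'cV[R]_p) : (Hs B x)^T = Hs B x.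
Proof. by rewrite /Hs linearB /= tr_diag_mx trmx_mul trmxK. Qed.

Lemma Hs_mul_const1 p k (B : 'M[R]_(p, k.+1)) (x : 'cV[R]_p) :
  Hs B x *m (const_mx 1 : 'M[R]_k.+1) = 0.
Proof. exact/diag_sub_outer_mul_const1/softmax_sum1. Qed.

Lemma const1_mul_Hs p k (B : 'M[R]_(p, k.+1)) (x : 'cV[R]_p) :
  (const_mx 1 : 'M[R]_k.+1) *m Hs B x = 0.
Proof.
by apply: trmx_inj; rewrite trmx_mul tr_Hs trmx_const Hs_mul_const1 trmx0.
Qed.

End Logistic.

Theorem lemmaS3p2 (R : realType) (K n p : nat) (hK : (1 <= K)%N)
  (Q : 'M[R]_(K.+1, K))
  (hQQt : Q *m Q^T = 1%:M - (K.+1)%:R^-1 *: const_mx 1)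
  (hQtQ : Q^T *m Q = 1%:M)
  (x : 'I_n -> 'cV[R]_p) (y : 'I_n -> 'cV[R]_(K.+1))
  (Bs : 'M[R]_(p, K.+1))
  (hmin : forall B : 'M[R]_(p, K.+1),
     \sum_(i < n) mlogit_loss (y i) (Bs^T *m x i)
       <= \sum_(i < n) mlogit_loss (y i) (B^T *m x i))
  (hinv : gram_kron (fun l => Q^T *m Hs Bs (x l) *m Q) x \in unitmx) :
  forall i : 'I_n,
    Vr (fun l => Q^T *m Hs Bs (x l) *m Q) x i
    = Q^T *m Vs (fun l => Hs Bs (x l)) x i *m Q.
Proof.
move=> i; set H := fun l => Hs Bs (x l); set U := Q *t (1%:M : 'M[R]_p).
have UtU : U^T *m U = 1%:M.
  by rewrite trmx_tens trmx1 tensmx_mul hQtQ mulmx1 tensmx1.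
have gram_H : gram_kron H x = U *m gram_kron (fun l => Q^T *m H l *m Q) x *m U^T.
  rewrite gram_kron_conj; congr (gram_kron _ x); apply/funext => l.
  by rewrite (centered_conjK hQQt) ?Hs_mul_const1 ?const1_mul_Hs.
rewrite /Vr /Vs gram_H mp_inverse_conj // (mulmxBr Q^T (H i)) mulmxBl.
congr (_ - _).
by rewrite -kron_rowv_conj -kron_colv_conj !mulmxA.
Qed.
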